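(* Let $h,n\geq2$. If $U\leq G$ is a symmetry group with respect to $(h,n)$, then $U$ is regular and $O(U)=U$.
   Context: Permutations compose as $(\sigma\tau)(x)=\sigma(\tau(x))$. Let $G=S_h\times S_n$ and $\mathcal{P}=(S_n)^h$ (preference profiles), with $G$ acting by $(p^{(\varphi,\psi)})_i=\psi\,p_{\varphi^{-1}(i)}$; $p^U=\{p^g:g\in U\}$. $U\leq G$ is regular if for every $p$, $\{g\in U:p^g=p\}\subseteq S_h\times\{id\}$. A social preference function (SPF) is any $F:\mathcal{P}\to S_n$; $G(F)=\{(\varphi,\psi)\in G: F(p^{(\varphi,\psi)})=\psi F(p)\ \forall p\}$; $U$ is a symmetry group with respect to $(h,n)$ if $U=G(F)$ for some SPF $F$. For regular $U$, $\mathcal{A}(U)$ is the set of regular $V\leq G$ with $V\geq U$ and $p^V\subseteq p^U$ for all $p$, and $O(U)=\langle\mathcal{A}(U)\rangle$. *)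

From mathcomp Require Import all_boot all_fingroup.
Set Implicit Arguments. Unset Strict Implicit. Unset Printing Implicit Defensive.
Local Open Scope group_scope.

(* Conventions: the paper composes permutations as (s t)(x) = s (t x);
   MathComp's product on {perm T} is (s * t) x = t (s x).  Hence the paper's
   composition  s o t  is written  (t * s)  below.  Subgroups and generated
   subgroups are the same for a group and its opposite, so this only
   matters in the definition of the action. *)

Definition Gtype (h n : nat) := ({perm 'I_h} * {perm 'I_n})%type.

Definition profile (h n : nat) := {ffun 'I_h -> {perm 'I_n}}.

(* (p^(phi,psi))_i = psi o p_(phi^{-1}(i)). *)
Definition pact (h n : nat) (p : profile h n) (g : Gtype h n) : profile h n :=
  [ffun i => p (g.1^-1 i) * g.2].

Definition SPF (h n : nat) := profile h n -> {perm 'I_n}.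

(* G(F) = {(phi,psi) : F(p^(phi,psi)) = psi o F(p) for all p}. *)
Definition symG (h n : nat) (F : SPF h n) : {set Gtype h n} :=
  [set g : Gtype h n | [forall p : profile h n, F (pact p g) == F p * g.2]].

Definition is_symmetry_group (h n : nat) (U : {set Gtype h n}) : Prop :=
  exists F : SPF h n, U = symG F.

Definition regular (h n : nat) (U : {set Gtype h n}) : bool :=
  [forall p : profile h n,
     [set g in U | pact p g == p] \subset [set g : Gtype h n | g.2 == 1]].

Definition porbit_of (h n : nat) (U : {set Gtype h n}) (p : profile h n)
  : {set profile h n} := [set pact p g | g in U].

Definition in_A (h n : nat) (U V : {group Gtype h n}) : bool :=
  [&& regular V, U \subset V &
      [forall p : profile h n, porbit_of V p \subset porbit_of U p]].

Definition O_of (h n : nat) (U : {group Gtype h n}) : {set Gtype h n} :=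
  << \bigcup_(V : {group Gtype h n} | in_A U V) V >>.

From mathcomp Require Import all_boot all_fingroup.
Set Implicit Arguments. Unset Strict Implicit. Unset Printing Implicit Defensive.
Local Open Scope group_scope.

(* If p^g = p for g in G(F), then F p = F p * g.2, so g.2 = 1: symmetry groups
   are regular.  If V is a regular group in A(U) with U = G(F), every v in V
   moves p to some p^u with u in U; then v u^-1 fixes p, so regularity of V
   forces v.2 = u.2, and F(p^v) = F(p^u) = F p * v.2 puts v in G(F) = U.
   Hence every member of A(U) lies in U, and U itself is one of them. *)

Section ProfileAction.

Variables h n : nat.
Implicit Types (p : profile h n) (g k : Gtype h n).

Lemma pact1 p : pact p 1 = p.
Proof. by apply/ffunP => i; rewrite ffunE invg1 perm1 mulg1. Qed.

Lemma pactM p g k : pact p (g * k) = pact (pact p g) k.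
Proof.
apply/ffunP => i; case: g k => [g1 g2] [k1 k2].
by rewrite !ffunE /= invMg permM mulgA.
Qed.

Lemma pactK p g : pact (pact p g) g^-1 = p.
Proof. by rewrite -pactM mulgV pact1. Qed.

Lemma regular_symG (F : SPF h n) : regular (symG F).
Proof.
apply/forallP => p; apply/subsetP => g; rewrite !inE.
case/andP => /forallP/(_ p)/eqP + /eqP fix_p.
by rewrite fix_p -{1}[F p]mulg1 => /mulgI <-.
Qed.

Lemma regular_pact_eq_snd (V : {group Gtype h n}) p u v :
  regular V -> u \in V -> v \in V -> pact p v = pact p u -> v.2 = u.2.
Proof.
move=> /forallP/(_ p)/subsetP regV Vu Vv puv.
have fix_p : pact p (v * u^-1) = p by rewrite pactM puv pactK.
have /regV : v * u^-1 \in [set g in V | pact p g == p].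
  by rewrite inE fix_p eqxx groupM ?groupV.
by rewrite inE /= -eq_mulgV1 => /eqP.
Qed.

Lemma in_A_refl (U : {group Gtype h n}) : regular U -> in_A U U.
Proof. by move=> regU; rewrite /in_A regU subxx; apply/forallP => p. Qed.

Lemma in_A_symG_sub (F : SPF h n) (U V : {group Gtype h n}) :
  U :=: symG F -> in_A U V -> V \subset U.
Proof.
move=> defU /and3P [regV sUV /forallP orbVU].
apply/subsetP => v Vv; rewrite defU inE; apply/forallP => p.
have /imsetP [u Uu puv] : pact p v \in porbit_of U p.
  by apply: (subsetP (orbVU p)); apply: imset_f.
have uv2 : v.2 = u.2 := regular_pact_eq_snd regV (subsetP sUV u Uu) Vv puv.
by move: Uu; rewrite defU inE puv uv2 => /forallP/(_ p).
Qed.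

Lemma O_of_id (U : {group Gtype h n}) :
  in_A U U -> (forall V : {group Gtype h n}, in_A U V -> V \subset U) ->
  O_of U = U.
Proof.
move=> AUU subU; apply/eqP; rewrite eqEsubset; apply/andP; split.
  by rewrite gen_subG; apply/bigcupsP.
exact: subset_trans (bigcup_sup U AUU) (sub_gen _).
Qed.

End ProfileAction.

Theorem mainTheorem16 (h n : nat) (U : {group Gtype h n}) :
  2 <= h -> 2 <= n -> is_symmetry_group (U : {set Gtype h n}) ->
  regular U /\ O_of U = U.
Proof.
move=> _ _ [F defU].
have regU : regular U by rewrite defU; apply: regular_symG.
split=> //; apply: O_of_id; first exact: in_A_refl.
by move=> V; apply: in_A_symG_sub defU.
Qed.
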